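(* Let $X$ be a real Banach space and $D\subset X$ dense. Then $X$ has the Daugavet property if and only if for every $\varepsilon>0$ and $x,z\in D$, either $\|z\|\ge\|x\|$ or $$z\in\overline{\mathrm{co}}_{\mathbb{Q}}\big\{y\in \|x\|\operatorname{int}(B_X)\cap D: \|x-y\|>2\|x\|-\varepsilon\big\}.$$
   Context: $X$ has the Daugavet property if for every $\varepsilon>0$, $x\in S_X$ and slice $S=\{y\in B_X:f(y)>1-\alpha\}$ ($f\in S_{X^*}$, $\alpha>0$) there is $y\in S$ with $\|x-y\|>2-\varepsilon$. $\overline{\mathrm{co}}_{\mathbb{Q}}(A)$ is the norm closure of the set of convex combinations of elements of $A$ with rational coefficients; $\operatorname{int}(B_X)$ is the open unit ball. *)

From HB Require Import structures.
From mathcomp Require Import all_boot all_order all_algebra.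
From mathcomp Require Import all_classical all_reals all_analysis.
Set Implicit Arguments. Unset Strict Implicit. Unset Printing Implicit Defensive.
Import Order.TTheory GRing.Theory Num.Theory.
Import numFieldNormedType.Exports.
Local Open Scope classical_set_scope.
Local Open Scope ring_scope.

Definition closed_unit_ball {R : realType} (X : normedModType R) : set X :=
  [set u | `|u| <= 1].

Definition open_unit_ball {R : realType} (X : normedModType R) : set X :=
  [set u | `|u| < 1].

Definition dual_sphere {R : realType} (X : normedModType R) (f : X -> R) : Prop :=
  (forall (a : R) (u v : X), f (a *: u + v) = a * f u + f v) /\
  continuous f /\
  sup [set `|f u| | u in (@closed_unit_ball R X)] = 1.

(* Daugavet property (slice formulation) *)
Definition daugavet {R : realType} (X : normedModType R) : Prop :=
  forall (eps : R), 0 < eps ->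
  forall x : X, `|x| = 1 ->
  forall f : X -> R, dual_sphere f ->
  forall alpha : R, 0 < alpha ->
  exists y : X, [/\ (@closed_unit_ball R X) y, f y > 1 - alpha & `|x - y| > 2 - eps].

Definition rat_conv {R : realType} (X : normedModType R) (A : set X) : set X :=
  [set z | exists (n : nat) (lam : 'I_n -> rat) (a : 'I_n -> X),
     [/\ forall i, A (a i), forall i, 0 <= lam i,
         \sum_(i < n) lam i = 1 &
         z = \sum_(i < n) (ratr (lam i) : R) *: a i]].

Definition closed_rat_conv {R : realType} (X : normedModType R) (A : set X) : set X :=
  closure (rat_conv A).

Definition scale_set {R : realType} (X : normedModType R) (r : R) (A : set X) : set X :=
  [set r *: u | u in A].

From HB Require Import structures.
From mathcomp Require Import all_boot all_order all_algebra.
From mathcomp Require Import all_classical all_reals all_analysis.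
From mathcomp Require Import lra.
Import Order.TTheory GRing.Theory Num.Theory.
Import numFieldNormedType.Exports.
Local Open Scope classical_set_scope.
Local Open Scope ring_scope.

(* Forward: suppose z, with |z| < |x|, is at distance r > 0 from the rational
   convex hull of A = far_points D x eps.  Approximating real coefficients by
   rational ones, every nonnegative combination of points of A - z has norm at
   least r times its total weight, so Hahn-Banach applied to the sublinear
   functional v |-> inf_s (|v - sum_i t_i y_i| - r sum_i t_i) gives a norm-one g
   with g <= g z - r on A.  Since g z <= |z| < |x|, the Daugavet property rescaled
   to the ball of radius |x|, together with the density of D, yields a point of A
   with g > g z - r.
   Backward: approximate x by x' in D and pick z' in D with |z'| < |x'| deep in the
   slice of |x'| B_X; as z' is in the closed rational hull of
   A = far_points D x' (eps / 4), some y in A nearly dominates z' for f, and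
   y / |x'| is the required point of the slice. *)

Section HahnBanach.
Context {R : realType} {V : lmodType R}.
Variable p : V -> R.
Hypothesis p_subadd : forall u v, p (u + v) <= p u + p v.
Hypothesis p_homo : forall s u, 0 < s -> p (s *: u) = s * p u.

(* Partial linear functionals dominated by p, encoded by their graphs so that
   Zorn's lemma applies to sets of pairs. *)
Definition dominated_graph (G : set (V * R)) :=
  [/\ forall s u v a b, G (u, a) -> G (v, b) -> G (s *: u + v, s * a + b),
      forall u a b, G (u, a) -> G (u, b) -> a = b &
      forall u a, G (u, a) -> a <= p u].

Lemma sublinear0 : p 0 = 0.
Proof. by have := @p_homo 2 0 (ltr0Sn R 1); rewrite scaler0 => h; lra. Qed.

Lemma dominated_graph_bigcup (F : set (set (V * R))) :
  F `<=` dominated_graph -> total_on F subset ->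
  dominated_graph (\bigcup_(G in F) G).
Proof.
move=> FP Ftot; split.
- move=> s u v a b [G1 FG1 G1u] [G2 FG2 G2v].
  have [G12|G21] := Ftot _ _ FG1 FG2.
  + by exists G2 => //; have [clG _ _] := FP _ FG2; exact: clG (G12 _ G1u) G2v.
  + by exists G1 => //; have [clG _ _] := FP _ FG1; exact: clG G1u (G21 _ G2v).
- move=> u a b [G1 FG1 G1u] [G2 FG2 G2v].
  have [G12|G21] := Ftot _ _ FG1 FG2.
  + by have [_ funG _] := FP _ FG2; exact: funG (G12 _ G1u) G2v.
  + by have [_ funG _] := FP _ FG1; exact: funG G1u (G21 _ G2v).
- by move=> u a [G FG Gu]; have [_ _ domG] := FP _ FG; exact: domG Gu.
Qed.

Lemma dominated_graph00 G : dominated_graph G -> G !=set0 -> G (0, 0).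
Proof.
move=> [clG _ _] [[u a] Gua].
by have := clG (-1) u u a a Gua Gua; rewrite scaleN1r addNr mulN1r addNr.
Qed.

Lemma dominated_graph_gap G w : dominated_graph G -> G (0, 0) ->
  exists c, forall u a, G (u, a) -> a - p (u - w) <= c /\ c <= p (u + w) - a.
Proof.
move=> [clG _ domG] G00.
pose E := [set pr.2 - p (pr.1 - w) | pr in G].
have supE : has_sup E.
  split; first by exists (0 - p (0 - w)), (0, 0).
  exists (p w) => _ [[u a] Gua <-] /=; rewrite lerBlDr.
  apply: le_trans (domG _ _ Gua) _.
  by rewrite addrC -[X in p X](subrK w u) p_subadd.
exists (sup E) => u a Gua; split.
  by apply: sup_upper_bound => //; exists (u, a).
apply: ge_sup; first by case: supE.
move=> _ [[u' a'] Gua' <-] /=; rewrite lerBrDr addrAC lerBlDr.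
have := domG _ _ (clG 1 _ _ _ _ Gua' Gua); rewrite scale1r mul1r.
move/le_trans; apply.
have -> : u' + u = (u' - w) + (u + w) by rewrite addrACA addNr addr0.
by rewrite addrC p_subadd.
Qed.

Definition graph_extension (G : set (V * R)) (w : V) (c : R) : set (V * R) :=
  [set pr | exists u a s, G (u, a) /\ pr = (u + s *: w, a + s * c)].

Section Extension.
Variables (G : set (V * R)) (w : V) (c : R).
Hypotheses (domG : dominated_graph G) (G00 : G (0, 0)).
Hypothesis w_notin : forall a, ~ G (w, a).
Hypothesis c_gap : forall u a, G (u, a) -> a - p (u - w) <= c /\ c <= p (u + w) - a.

Lemma graph_extension_le u a s : G (u, a) -> a + s * c <= p (u + s *: w).
Proof.
case: domG => clG _ dom Gua.
have Gs t : G (t *: u, t * a) by have := clG t _ _ _ _ Gua G00; rewrite !addr0.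
have [s0|s0|->] := ltgtP s 0; last by rewrite scale0r mul0r !addr0; exact: dom.
- pose t := - s; have t0 : 0 < t by rewrite oppr_gt0.
  have [+ _] := c_gap _ _ (Gs t^-1).
  have -> : u + s *: w = t *: (t^-1 *: u - w).
    by rewrite scalerBr scalerA mulfV ?gt_eqF // scale1r scaleNr opprK.
  rewrite p_homo // => h.
  have : t * (t^-1 * a - p (t^-1 *: u - w)) <= t * c by rewrite ler_pM2l.
  rewrite mulrBr mulrA mulfV ?gt_eqF // mul1r /t; lra.
- have [_ +] := c_gap _ _ (Gs s^-1).
  have -> : u + s *: w = s *: (s^-1 *: u + w).
    by rewrite scalerDr scalerA mulfV ?gt_eqF // scale1r.
  rewrite p_homo // => h.
  have : s * c <= s * (p (s^-1 *: u + w) - s^-1 * a) by rewrite ler_pM2l.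
  by rewrite mulrBr mulrA mulfV ?gt_eqF // mul1r; lra.
Qed.

Lemma graph_extension_dominated : dominated_graph (graph_extension G w c).
Proof.
case: domG => clG funG _; split.
- move=> s _ _ _ _ [u1 [a1 [s1 [G1 [-> ->]]]]] [u2 [a2 [s2 [G2 [-> ->]]]]].
  exists (s *: u1 + u2), (s * a1 + a2), (s * s1 + s2); split; first exact: clG.
  congr (_, _); first by rewrite scalerDr scalerA addrACA -scalerDl.
  by rewrite mulrDr mulrA addrACA -mulrDl.
- move=> _ _ _ [u1 [a1 [s1 [G1 [-> ->]]]]] [u2 [a2 [s2 [G2 []]]]] e12 ->.
  have [es|s12] := eqVneq s1 s2.
    by rewrite -es in e12 *; rewrite (funG u1 a1 a2 G1) // (addIr _ e12).
  (* Two representations with s1 != s2 would put w in the domain of G. *)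
  exfalso; apply: (w_notin ((s1 - s2)^-1 * (-1 * a1 + a2) + 0)).
  have := clG (s1 - s2)^-1 _ _ _ _ (clG (-1) _ _ _ _ G1 G2) G00.
  have -> : -1 *: u1 + u2 = (s1 - s2) *: w.
    have -> : u2 = u1 + s1 *: w - s2 *: w by rewrite e12 addrK.
    by rewrite scaleN1r scalerBl -addrA addKr.
  by rewrite scalerA mulVf ?subr_eq0 // scale1r addr0.
- by move=> _ _ [u [a [s [Gua [-> ->]]]]]; exact: graph_extension_le.
Qed.

End Extension.

Lemma hahn_banach : exists f : V -> R, scalar f /\ forall v, f v <= p v.
Proof.
have [M [domM maxM]] := Zorn_bigcup dominated_graph_bigcup.
have M00 : M (0, 0).
  have [M0|/set0P] := eqVneq M set0; last exact: dominated_graph00.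
  exfalso; apply: (maxM [set (0, 0)]).
    by rewrite M0; split; [exact: sub0set | move=> /(_ (0, 0) erefl)].
  split.
  - by move=> s u v a b [-> ->] [-> ->]; rewrite scaler0 addr0 mulr0 addr0.
  - by move=> u a b [_ ->] [_ ->].
  - by move=> u a [-> ->]; rewrite sublinear0.
have totM w : exists a, M (w, a).
  apply: contrapT => /forallNP w_notin.
  have [c c_gap] := dominated_graph_gap M w domM M00.
  apply: (maxM (graph_extension M w c)); last exact: graph_extension_dominated.
  split.
    by move=> [u a] Mua; exists u, a, 0; rewrite scale0r mul0r !addr0.
  move=> /(_ (w, c)) Mw; apply: (w_notin c); apply: Mw.
  by exists 0, 0, 1; rewrite add0r scale1r add0r mul1r.
have [f Mf] := choice totM.
case: domM => clM funM domM.
exists f; split; last by move=> v; exact: domM (Mf v).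
by move=> a u v; apply: (funM (a *: u + v)); [exact: Mf | exact: clM].
Qed.

End HahnBanach.
Arguments hahn_banach {R V p}.

Section ScalarFunctional.
Context {R : realType} {X : lmodType R} {f : X -> R}.
Hypothesis f_scalar : scalar f.
Definition scalar_of : {scalar X} := HB.pack f (GRing.isLinear.Build _ _ _ _ f f_scalar).

Lemma scalar_fun0 : f 0 = 0. Proof. exact: (raddf0 scalar_of). Qed.
Lemma scalar_funB u v : f (u - v) = f u - f v. Proof. exact: (raddfB scalar_of). Qed.
Lemma scalar_funN v : f (- v) = - f v. Proof. exact: (raddfN scalar_of). Qed.
Lemma scalar_funZ a v : f (a *: v) = a * f v. Proof. exact: (scalarZ scalar_of). Qed.
Lemma scalar_fun_sum (I : Type) (s : seq I) (G : I -> X) :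
  f (\sum_(i <- s) G i) = \sum_(i <- s) f (G i).
Proof. exact: (raddf_sum scalar_of). Qed.

End ScalarFunctional.

Section ConeSeparation.
Context {R : realType} {X : normedModType R}.

Definition comb_on (Y : set X) (s : seq (R * X)) :=
  forall pr, pr \in s -> 0 <= pr.1 /\ Y pr.2.
Definition weight (s : seq (R * X)) := \sum_(pr <- s) pr.1.
Definition comb (s : seq (R * X)) := \sum_(pr <- s) pr.1 *: pr.2.

(* Homogeneous form of: the convex hull of Y misses the open ball of radius r. *)
Definition cone_bounded_below (Y : set X) (r : R) :=
  forall s, comb_on Y s -> weight s * r <= `|comb s|.

Variables (Y : set X) (r : R).
Hypothesis coneY : cone_bounded_below Y r.

Definition gauge_gap v s := `|v - comb s| - weight s * r.
Definition sep_gauge v := inf [set gauge_gap v s | s in comb_on Y].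

Lemma gauge_gap_ge v {s} : comb_on Y s -> - `|v| <= gauge_gap v s.
Proof.
by move=> /coneY; have := lerB_dist (comb s) v; rewrite distrC /gauge_gap; lra.
Qed.

Lemma has_inf_gauge v : has_inf [set gauge_gap v s | s in comb_on Y].
Proof.
split; first by exists (gauge_gap v [::]), [::].
by exists (- `|v|) => _ [s Ys <-]; exact: gauge_gap_ge.
Qed.

Lemma sep_gauge_le v {s} : comb_on Y s -> sep_gauge v <= gauge_gap v s.
Proof. by move=> Ys; apply: ge_inf; [case: (has_inf_gauge v) | exists s]. Qed.

Lemma sep_gauge_near v {e} : 0 < e ->
  exists2 s, comb_on Y s & gauge_gap v s < sep_gauge v + e.
Proof.
by move=> e0; have [_ [s Ys <-] lt] := inf_adherent e0 (has_inf_gauge v); exists s.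
Qed.

Lemma sep_gauge_le_norm v : sep_gauge v <= `|v|.
Proof.
have Y0 : comb_on Y [::] by [].
apply: (le_trans (sep_gauge_le v Y0)).
by rewrite /gauge_gap /comb /weight !big_nil subr0 mul0r subr0.
Qed.

Lemma sep_gauge_subadd u v : sep_gauge (u + v) <= sep_gauge u + sep_gauge v.
Proof.
apply/ler_addgt0Pr => e e0.
have e2 : 0 < e / 2 by rewrite divr_gt0.
have [s1 Ys1 lt1] := sep_gauge_near u e2.
have [s2 Ys2 lt2] := sep_gauge_near v e2.
have Ys12 : comb_on Y (s1 ++ s2).
  by move=> pr; rewrite mem_cat => /orP[/Ys1|/Ys2].
apply: (le_trans (sep_gauge_le _ Ys12)).
have : gauge_gap (u + v) (s1 ++ s2) <= gauge_gap u s1 + gauge_gap v s2.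
  rewrite /gauge_gap /comb /weight !big_cat /= mulrDl.
  by have := ler_normD (u - comb s1) (v - comb s2); rewrite opprD addrACA; lra.
lra.
Qed.

Lemma sep_gauge_homo_le c v : 0 < c -> sep_gauge (c *: v) <= c * sep_gauge v.
Proof.
move=> c0; apply/ler_addgt0Pr => e e0.
have [s Ys lt] := sep_gauge_near v (divr_gt0 e0 c0).
pose cs := [seq (c * pr.1, pr.2) | pr <- s].
have Ycs : comb_on Y cs.
  move=> _ /mapP[pr prs ->] /=; have [pr1 Ypr] := Ys _ prs.
  by rewrite mulr_ge0 // ltW.
apply: (le_trans (sep_gauge_le _ Ycs)).
have -> : gauge_gap (c *: v) cs = c * gauge_gap v s.
  rewrite /gauge_gap /comb /weight !big_map /= mulrBr mulrA -mulr_sumr.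
  under eq_bigr do rewrite -scalerA.
  by rewrite -scaler_sumr -scalerBr normrZ gtr0_norm.
have : c * gauge_gap v s <= c * (sep_gauge v + e / c) by rewrite ler_pM2l // ltW.
by move/le_trans; apply; rewrite mulrDr mulrCA mulfV ?gt_eqF // mulr1.
Qed.

Lemma sep_gauge_homo c v : 0 < c -> sep_gauge (c *: v) = c * sep_gauge v.
Proof.
move=> c0; apply/eqP; rewrite eq_le sep_gauge_homo_le //=.
have ci : 0 < c^-1 by rewrite invr_gt0.
have := sep_gauge_homo_le _ (c *: v) ci.
rewrite scalerA mulVf ?gt_eqF // scale1r => le.
by rewrite -ler_pdivlMl // mulrC.
Qed.

Lemma cone_separation : exists f : X -> R,
  [/\ scalar f, forall v, `|f v| <= `|v| & forall y, Y y -> f y <= - r].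
Proof.
have [f [f_scalar f_le]] := hahn_banach sep_gauge_subadd sep_gauge_homo.
exists f; split => //.
- move=> v; rewrite ler_norml; apply/andP; split.
    have := f_le (- v); have := sep_gauge_le_norm (- v).
    by rewrite (scalar_funN f_scalar) normrN; lra.
  exact: le_trans (f_le v) (sep_gauge_le_norm v).
- move=> y Yy; apply: (le_trans (f_le y)).
  have Y1 : comb_on Y [:: (1, y)] by move=> pr; rewrite inE => /eqP ->.
  apply: (le_trans (sep_gauge_le _ Y1)).
  by rewrite /gauge_gap /comb /weight !big_seq1 /= scale1r subrr normr0 mul1r sub0r.
Qed.

End ConeSeparation.
Arguments cone_separation {R X Y r}.

Section DualSphere.
Context {R : realType} {X : normedModType R}.

Lemma scalar_lipschitz_continuous {f : X -> R} {k} : scalar f -> 0 < k ->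
  (forall v, `|f v| <= k * `|v|) -> continuous f.
Proof.
move=> f_scalar k0 f_le x; apply/cvgrPdist_lt => e e0.
have ek : 0 < e / k by rewrite divr_gt0.
near=> t; rewrite -(scalar_funB f_scalar); apply: (le_lt_trans (f_le _)).
rewrite -ltr_pdivlMl // mulrC; near: t.
by apply: (@cvgr_dist_lt _ _ _ (nbhs x) _ id x) => //; exact: cvg_id.
Unshelve. all: end_near.
Qed.

Lemma dual_sphere_scalar {f : X -> R} : dual_sphere f -> scalar f.
Proof. by case. Qed.

Lemma dual_sphere_continuous {f : X -> R} : dual_sphere f -> continuous f.
Proof. by case=> _ []. Qed.

Lemma dual_sphere_has_sup {f : X -> R} : dual_sphere f ->
  has_sup [set `|f u| | u in @closed_unit_ball R X].
Proof.
move=> [_ [_ sup1]]; split.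
  by exists `|f 0|, 0 => //; rewrite /closed_unit_ball /= normr0.
apply: contrapT => no_ub; move: sup1; rewrite sup_out; last by case.
by move/eqP; rewrite eq_sym oner_eq0.
Qed.

Lemma dual_sphere_le_norm {f : X -> R} v : dual_sphere f -> `|f v| <= `|v|.
Proof.
move=> ds; have [f_scalar [_ sup1]] := ds.
have [->|v0] := eqVneq v 0; first by rewrite (scalar_fun0 f_scalar) !normr0.
have nv : 0 < `|v| by rewrite normr_gt0.
have : `|f (`|v|^-1 *: v)| <= 1.
  rewrite -sup1; apply: sup_upper_bound; first exact: dual_sphere_has_sup.
  exists (`|v|^-1 *: v) => //.
  by rewrite /closed_unit_ball /= normrZ normfV normr_id mulVf ?gt_eqF.
by rewrite (scalar_funZ f_scalar) normrM normfV normr_id ler_pdivrMl // mulr1.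
Qed.

Lemma dual_sphere_near1 {f : X -> R} {d} : dual_sphere f -> 0 < d ->
  exists2 u, `|u| <= 1 & 1 - d < f u.
Proof.
move=> ds d0; have [f_scalar [_ sup1]] := ds.
have [_ [u u1 <-]] := sup_adherent d0 (dual_sphere_has_sup ds).
rewrite sup1 => lt; have [fu0|fu0] := leP 0 (f u).
  by exists u => //; rewrite -(ger0_norm fu0).
exists (- u); first by rewrite normrN.
by rewrite (scalar_funN f_scalar) -(ltr0_norm fu0).
Qed.

Lemma dual_sphere_normalize {f : X -> R} {v0} : scalar f ->
  (forall v, `|f v| <= `|v|) -> f v0 != 0 ->
  exists N, [/\ 0 < N, N <= 1 & dual_sphere (fun v => f v / N)].
Proof.
move=> f_scalar f_le fv0.
pose S := [set `|f u| | u in @closed_unit_ball R X].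
have S1 : ubound S 1 by move=> _ [u u1 <-]; exact: le_trans (f_le u) u1.
have S0 : S !=set0 by exists `|f 0|, 0 => //; rewrite /closed_unit_ball /= normr0.
have supS : has_sup S by split; last exists 1.
pose N := sup S.
have nv0 : 0 < `|v0|.
  by rewrite normr_gt0; apply: contraNneq fv0 => ->; rewrite (scalar_fun0 f_scalar).
have N0 : 0 < N.
  apply: (@lt_le_trans _ _ `|f (`|v0|^-1 *: v0)|).
    rewrite (scalar_funZ f_scalar) normrM normfV normr_id mulr_gt0 ?invr_gt0 //.
    by rewrite normr_gt0.
  apply: sup_upper_bound => //; exists (`|v0|^-1 *: v0) => //.
  by rewrite /closed_unit_ball /= normrZ normfV normr_id mulVf ?gt_eqF.
have fN u : @closed_unit_ball R X u -> `|f u| <= N.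
  by move=> u1; apply: sup_upper_bound => //; exists u.
have fN_scalar : scalar (fun v => f v / N).
  by move=> a u v; rewrite f_scalar mulrDl mulrA.
exists N; split => //; first exact: ge_sup.
split; [exact: fN_scalar | split].
  apply: (scalar_lipschitz_continuous fN_scalar (_ : 0 < N^-1)) => [|v].
    by rewrite invr_gt0.
  by rewrite normrM normfV (gtr0_norm N0) mulrC ler_pM2l ?invr_gt0.
pose S' := [set `|f u / N| | u in @closed_unit_ball R X].
have S'1 : ubound S' 1.
  by move=> _ [u u1 <-]; rewrite normrM normfV (gtr0_norm N0) ler_pdivrMr // mul1r fN.
have S'0 : S' !=set0 by exists `|f 0 / N|, 0 => //; rewrite /closed_unit_ball /= normr0.
have supS' : has_sup S' by split; last exists 1.
apply/eqP; rewrite eq_le; apply/andP; split; first exact: ge_sup.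
rewrite -(ler_pM2l N0) mulr1; apply: ge_sup => // _ [u u1 <-].
have : `|f u / N| <= sup S' by apply: sup_upper_bound => //; exists u.
by rewrite normrM normfV (gtr0_norm N0) ler_pdivrMr // mulrC.
Qed.

Lemma cone_bounded_below1 (x : X) : cone_bounded_below [set x] `|x|.
Proof.
move=> s sx; have w0 : 0 <= weight s.
  by rewrite /weight big_seq sumr_ge0 // => pr /sx [].
have -> : comb s = weight s *: x.
  rewrite /comb /weight scaler_suml big_seq [in RHS]big_seq.
  by apply: eq_bigr => pr /sx [_ ->].
by rewrite normrZ ger0_norm.
Qed.

Lemma cone_separation_dual_sphere (Y : set X) r y0 : 0 < r ->
  cone_bounded_below Y r -> Y y0 ->
  exists g : X -> R, dual_sphere g /\ forall y, Y y -> g y <= - r.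
Proof.
move=> r0 coneY Yy0.
have [f [f_scalar f_le fY]] := cone_separation coneY.
have fy0 : f y0 != 0.
  by apply: ltr0_neq0; apply: (le_lt_trans (fY _ Yy0)); rewrite oppr_lt0.
have [N [N0 N1 dsN]] := dual_sphere_normalize f_scalar f_le fy0.
exists (fun v => f v / N); split => // y Yy.
have : f y / N <= - r / N by rewrite ler_pM2r ?invr_gt0 ?fY.
have : r <= r / N by rewrite ler_pdivlMr // ler_piMr // ltW.
rewrite mulNr; lra.
Qed.

Lemma separating_dual_sphere {Y : set X} {r} {x0 : X} : x0 != 0 -> 0 < r ->
  cone_bounded_below Y r ->
  exists g : X -> R, dual_sphere g /\ forall y, Y y -> g y <= - r.
Proof.
move=> x00 r0 coneY; have [[y0 Yy0]|Y0] := pselect (Y !=set0).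
  exact: cone_separation_dual_sphere coneY Yy0.
(* For empty Y any norm-one functional will do; separating x0 from 0 gives one. *)
have [||g [dsg _]] :=
  @cone_separation_dual_sphere [set x0] _ x0 _ (cone_bounded_below1 x0).
- by rewrite normr_gt0.
- by [].
by exists g; split => // y Yy; exfalso; apply: Y0; exists y.
Qed.

End DualSphere.

Section RationalCombinations.
Context {R : realType} {X : normedModType R}.

Definition ratr_coefs (s : seq (rat * X)) : seq (R * X) :=
  [seq (ratr pr.1, pr.2) | pr <- s].

Lemma weight_ratr_coefs s : weight (ratr_coefs s) = ratr (\sum_(pr <- s) pr.1).
Proof. by rewrite /weight big_map rmorph_sum. Qed.

Lemma rat_approx {t e : R} : 0 <= t -> 0 < e ->
  exists2 q : rat, 0 <= q & `|t - ratr q| < e.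
Proof.
move=> t0 e0; have /rat_in_itvoo[q] : t < t + e by rewrite ltrDl.
rewrite in_itv /= => /andP[tq qte]; exists q.
  by rewrite -(ler0q R); exact: le_trans t0 (ltW tq).
by rewrite distrC ger0_norm; lra.
Qed.

Lemma rat_comb_approx {Y : set X} {s d} : comb_on Y s -> 0 < d ->
  exists s', [/\ comb_on Y (ratr_coefs s'), `|comb s - comb (ratr_coefs s')| <= d
               & weight s - d <= weight (ratr_coefs s')].
Proof.
elim: s d => [|[t y] s IH] d Ys d0.
  by exists [::]; rewrite /comb /weight !big_nil subrr normr0 ltW //; split => //; lra.
have [t0 Yy] := Ys _ (mem_head _ _).
have [||s' [Ys' comb_le weight_ge]] := IH (d / 2).
- by move=> pr prs; apply: Ys; rewrite in_cons prs orbT.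
- by rewrite divr_gt0.
have k0 : 0 < `|y| + 1 by rewrite ltr_wpDl.
have d2k : 0 < d / 2 / (`|y| + 1) by rewrite !divr_gt0.
have [q q0 tq] := rat_approx t0 d2k.
have tqk : `|t - ratr q| * (`|y| + 1) < d / 2 by rewrite -ltr_pdivlMr.
have tqy : 0 <= `|t - ratr q| * `|y| by rewrite mulr_ge0.
exists ((q, y) :: s'); split.
- move=> pr; rewrite in_cons => /orP[/eqP -> /=|]; last exact: Ys'.
  by rewrite ler0q.
- rewrite /comb !big_cons /= -/(comb s) -/(comb (ratr_coefs s')).
  rewrite opprD addrACA -scalerBl.
  apply: (le_trans (ler_normD _ _)); rewrite normrZ.
  by have := normr_ge0 (t - ratr q); move: tqk; rewrite mulrDr mulr1; lra.
- rewrite /weight !big_cons /= -/(weight s) -/(weight (ratr_coefs s')).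
  by have := ler_norm (t - ratr q); move: tqk; rewrite mulrDr mulr1; lra.
Qed.

Lemma cone_bounded_below_ratr_coefs (Y : set X) r : 0 <= r ->
  (forall s, comb_on Y (ratr_coefs s) ->
     weight (ratr_coefs s) * r <= `|comb (ratr_coefs s)|) ->
  cone_bounded_below Y r.
Proof.
move=> r0 rat_cone s Ys; apply/ler_addgt0Pr => e e0.
pose d := e / (r + 1).
have d0 : 0 < d by rewrite divr_gt0 // ltr_wpDl.
have de : d * (r + 1) = e by rewrite divfK // gt_eqF // ltr_wpDl.
have [s' [Ys' comb_le weight_ge]] := rat_comb_approx Ys d0.
have := rat_cone _ Ys'.
have := lerB_dist (comb (ratr_coefs s')) (comb s); rewrite distrC.
have : (weight s - d) * r <= weight (ratr_coefs s') * r by rewrite ler_wpM2r.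
by move: de comb_le; rewrite mulrBl mulrDr mulr1; lra.
Qed.

Lemma rat_conv_ratr_coefs (A : set X) s : comb_on A (ratr_coefs s) ->
  \sum_(pr <- s) pr.1 = 1 -> rat_conv A (comb (ratr_coefs s)).
Proof.
move=> As s1; pose x0 : rat * X := (0, 0).
have As' (i : 'I_(size s)) : 0 <= (nth x0 s i).1 /\ A (nth x0 s i).2.
  have /As[] : (ratr (nth x0 s i).1, (nth x0 s i).2) \in ratr_coefs s.
    by apply/mapP; exists (nth x0 s i) => //; rewrite mem_nth.
  by rewrite ler0q.
exists (size s), (fun i => (nth x0 s i).1), (fun i => (nth x0 s i).2); split.
- by move=> i; case: (As' i).
- by move=> i; case: (As' i).
- by rewrite -s1 (big_nth x0) big_mkord.
- by rewrite /comb big_map (big_nth x0) big_mkord.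
Qed.

(* Rescaling a rational combination of points of A - z to total weight 1 gives
   a point c - z with c in the rational convex hull of A. *)
Lemma cone_bounded_below_rat_conv {A : set X} {z r} : 0 <= r ->
  (forall c, rat_conv A c -> r <= `|c - z|) ->
  cone_bounded_below [set a - z | a in A] r.
Proof.
move=> r0 farA; apply: cone_bounded_below_ratr_coefs => // s Ys.
rewrite weight_ratr_coefs; set Q := \sum_(pr <- s) pr.1.
have q0 pr : pr \in s -> 0 <= pr.1.
  by move=> /(map_f (fun pr => (ratr pr.1 : R, pr.2)))/Ys[]; rewrite ler0q.
have [->|Q0] := eqVneq Q 0; first by rewrite rmorph0 mul0r.
have Qp : 0 < Q by rewrite lt_def Q0 /Q big_seq sumr_ge0.
pose s' := [seq (pr.1 / Q, pr.2 + z) | pr <- s].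
have As' : comb_on A (ratr_coefs s').
  move=> _ /mapP[x /mapP[pr prs ->] ->] /=.
  split; first by rewrite ler0q divr_ge0 ?q0 ?ltW.
  have [_ [a Aa az]] := Ys _ (map_f (fun pr => (ratr pr.1 : R, pr.2)) prs).
  by move: az => /= <-; rewrite subrK.
have s'1 : \sum_(pr <- s') pr.1 = 1 by rewrite big_map -mulr_suml mulfV.
have -> : comb (ratr_coefs s) = ratr Q *: (comb (ratr_coefs s') - z).
  rewrite /comb !big_map scalerBr scaler_sumr.
  under [in RHS]eq_bigr do rewrite scalerA -rmorphM mulrC divfK // scalerDr.
  by rewrite big_split /= -scaler_suml -rmorph_sum addrK.
rewrite normrZ ger0_norm ?ler0q ?(ltW Qp) // ler_pM2l ?ltr0q //.
exact/farA/rat_conv_ratr_coefs.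
Qed.

Lemma rat_conv_le_max {A : set X} {f : X -> R} {c} : scalar f -> rat_conv A c ->
  exists2 a, A a & f c <= f a.
Proof.
move=> f_scalar [n [lam [a [Aa l0 l1 ->]]]].
case: n lam a Aa l0 l1 => [|n] lam a Aa l0 l1.
  by move: l1; rewrite big_ord0 => /eqP; rewrite eq_sym oner_eq0.
have [i _ le_ai] := @arg_maxP _ _ _ ord0 xpredT (fun i => f (a i)) isT.
exists (a i) => //; rewrite (scalar_fun_sum f_scalar).
apply: (@le_trans _ _ (\sum_(j < n.+1) (ratr (lam j) : R) * f (a i))).
  apply: ler_sum => j _; rewrite (scalar_funZ f_scalar) ler_wpM2l ?ler0q //.
  exact: le_ai.
by rewrite -mulr_suml -rmorph_sum l1 rmorph1 mul1r.
Qed.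

End RationalCombinations.

Lemma dense_meets_open {T : topologicalType} {D O : set T} {y} :
  dense D -> open O -> O y -> exists2 z, D z & O z.
Proof. by move=> dD oO Oy; have [z [Oz Dz]] := dD O (ex_intro _ y Oy) oO; exists z. Qed.

Section NormedApproximation.
Context {R : realType} {X : normedModType R}.

Lemma open_gt_preimage {f : X -> R} c : continuous f -> open [set z | c < f z].
Proof.
by move=> cf; apply: (@open_comp _ _ f [set y | c < y]) => [z _|];
  [exact: cf | exact: open_gt].
Qed.

Lemma open_lt_preimage {f : X -> R} c : continuous f -> open [set z | f z < c].
Proof.
by move=> cf; apply: (@open_comp _ _ f [set y | y < c]) => [z _|];
  [exact: cf | exact: open_lt].
Qed.

Lemma continuous_dist (x : X) : continuous (fun z => `|x - z|).
Proof.
move=> z; apply: (@continuous_comp _ _ _ (fun w => x - w) Num.norm).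
  by apply: cvgB; [exact: cvg_cst | exact: cvg_id].
exact: norm_continuous.
Qed.

Lemma dense_near {D : set X} x {d} : dense D -> 0 < d ->
  exists2 x', D x' & `|x - x'| < d.
Proof.
move=> dD d0.
apply: (dense_meets_open (y := x) dD (open_lt_preimage d (continuous_dist x))).
by rewrite /= subrr normr0.
Qed.

Lemma closure_near {A : set X} {z d} : closure A z -> 0 < d ->
  exists2 c, A c & `|z - c| < d.
Proof.
move=> Az d0; have [c [Ac zc]] := Az _ (nbhsx_ballx z d d0).
by exists c => //; move: zc; rewrite -ball_normE.
Qed.

Lemma not_closure_dist {A : set X} {z} : ~ closure A z ->
  exists2 r, 0 < r & forall c, A c -> r <= `|c - z|.
Proof.
move=> nAz; apply: contrapT => no_r; apply: nAz => B /nbhs_ballP[e e0 eB].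
apply: contrapT => nAB; apply: no_r; exists e => // c Ac.
rewrite leNgt; apply/negP => ce; apply: nAB; exists c; split => //.
by apply: eB; rewrite -ball_normE /= distrC.
Qed.

Lemma mem_scale_open_unit_ball (M : R) (y : X) : 0 < M -> `|y| < M ->
  scale_set M (@open_unit_ball R X) y.
Proof.
move=> M0 yM; exists (M^-1 *: y); last by rewrite scalerA mulfV ?gt_eqF // scale1r.
by rewrite /open_unit_ball /= normrZ normfV gtr0_norm // ltr_pdivrMl // mulr1.
Qed.

End NormedApproximation.

Section Daugavet.
Context {R : realType} {X : normedModType R}.

Definition far_points (D : set X) (x : X) (eps : R) : set X :=
  scale_set `|x| (@open_unit_ball R X) `&` D `&` [set y | `|x - y| > 2 * `|x| - eps].

(* Apply the Daugavet property to x / |x| with slice depth and accuracy delta, then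
   shrink the point obtained by the factor 1 - delta. *)
Lemma daugavet_open_ball {x : X} {g : X -> R} {c eps} : daugavet X ->
  x != 0 -> dual_sphere g -> c < `|x| -> 0 < eps ->
  exists y, [/\ `|y| < `|x|, c < g y & 2 * `|x| - eps < `|x - y|].
Proof.
move=> dX x0 dsg cx e0; set M := `|x|.
have M0 : 0 < M by rewrite normr_gt0.
have M4 : 0 < 4 * M by rewrite mulr_gt0.
pose delta := Num.min (1 / 2) (Num.min ((M - c) / (4 * M)) (eps / (4 * M))).
have d0 : 0 < delta by rewrite !lt_min !divr_gt0 // subr_gt0.
have d1 : delta <= 1 / 2 by rewrite ge_min lexx.
have dc : delta * (4 * M) <= M - c.
  by rewrite -ler_pdivlMr // ge_min; apply/orP; right; rewrite ge_min lexx.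
have de : delta * (4 * M) <= eps.
  by rewrite -ler_pdivlMr // ge_min; apply/orP; right; rewrite ge_min lexx orbT.
have x1 : `|M^-1 *: x| = 1 by rewrite normrZ normfV normr_id mulVf ?gt_eqF.
have [y0 [y01 gy0 dy0]] := dX _ d0 _ x1 _ dsg _ d0.
move: y01; rewrite /closed_unit_ball /= => y01.
have dM : 0 < delta * M by rewrite mulr_gt0.
pose t := (1 - delta) * M.
have t0 : 0 < t by rewrite mulr_gt0 // subr_gt0; lra.
have tM : t = M - delta * M by rewrite /t mulrBl mul1r.
exists (t *: y0); split.
- rewrite normrZ gtr0_norm //.
  have : t * `|y0| <= t * 1 by rewrite ler_wpM2l // ltW.
  lra.
- rewrite (scalar_funZ (dual_sphere_scalar dsg)).
  have : t * (1 - delta) < t * g y0 by rewrite ltr_pM2l.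
  have : 0 <= delta * delta * M by rewrite !mulr_ge0 // ltW.
  rewrite tM; nra.
- have -> : x - t *: y0 = M *: (M^-1 *: x - y0) + (delta * M) *: y0.
    rewrite scalerBr scalerA mulfV ?gt_eqF // scale1r tM scalerBl opprB.
    by rewrite addrA [RHS]addrAC.
  have := lerB_normD (M *: (M^-1 *: x - y0)) ((delta * M) *: y0).
  rewrite !normrZ !gtr0_norm //.
  have : M * (2 - delta) < M * `|M^-1 *: x - y0| by rewrite ltr_pM2l.
  have : delta * M * `|y0| <= delta * M * 1 by rewrite ler_wpM2l // ltW.
  nra.
Qed.

Lemma daugavet_dense {D : set X} {x : X} {g : X -> R} {c eps} :
  dense D -> daugavet X -> x != 0 -> dual_sphere g -> c < `|x| -> 0 < eps ->
  exists2 y, D y & [/\ `|y| < `|x|, c < g y & 2 * `|x| - eps < `|x - y|].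
Proof.
move=> dD dX x0 dsg cx e0.
have [y0 [y0x gy0 xy0]] := daugavet_open_ball dX x0 dsg cx e0.
pose O := [set y | `|y| < `|x|] `&` [set y | c < g y]
  `&` [set y | 2 * `|x| - eps < `|x - y|].
have oO : open O.
  apply: openI; first apply: openI.
  - exact: open_lt_preimage norm_continuous.
  - exact: open_gt_preimage (dual_sphere_continuous dsg).
  - exact: open_gt_preimage (continuous_dist x).
have [|y Dy [[yx gy] xy]] := dense_meets_open (y := y0) dD oO; first by [].
by exists y.
Qed.

Lemma daugavet_closed_rat_conv (D : set X) eps (x z : X) :
  dense D -> daugavet X -> 0 < eps -> `|z| < `|x| ->
  closed_rat_conv (far_points D x eps) z.
Proof.
move=> dD dX e0 zx; apply: contrapT => /not_closure_dist[r r0 farA].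
have x0 : x != 0 by rewrite -normr_gt0 (le_lt_trans _ zx).
have [g [dsg gA]] :=
  separating_dual_sphere x0 r0 (cone_bounded_below_rat_conv (ltW r0) farA).
have gz : g z - r < `|x|.
  by have := ler_norm (g z); have := dual_sphere_le_norm z dsg; lra.
have [y Dy [yx gy xy]] := daugavet_dense dD dX x0 dsg gz e0.
have Ay : far_points D x eps y.
  by split; [split|] => //; apply: mem_scale_open_unit_ball; rewrite ?normr_gt0.
have := gA (y - z) (ex_intro2 _ _ y Ay erefl).
by rewrite (scalar_funB (dual_sphere_scalar dsg)); lra.
Qed.

Lemma closed_rat_conv_near_sup {A : set X} {f : X -> R} {z d} : dual_sphere f ->
  closed_rat_conv A z -> 0 < d -> exists2 a, A a & f z - d < f a.
Proof.
move=> dsf Az d0; have [c Ac zc] := closure_near Az d0.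
have [a Aa ca] := rat_conv_le_max (dual_sphere_scalar dsf) Ac.
exists a => //; have := dual_sphere_le_norm (z - c) dsf.
by rewrite (scalar_funB (dual_sphere_scalar dsf)); have := ler_norm (f z - f c); lra.
Qed.

Lemma dense_slice {D : set X} {f : X -> R} {b m} : dense D -> dual_sphere f ->
  0 < m -> b < m -> exists2 z, D z & `|z| < m /\ b < f z.
Proof.
move=> dD dsf m0 bm; pose b' := Num.max b 0; pose s := (b' + m) / 2.
have b'm : b' < m by rewrite gt_max bm m0.
have b'0 : 0 <= b' by rewrite le_max lexx orbT.
have bb' : b <= b' by rewrite le_max lexx.
have s0 : 0 < s by rewrite /s; lra.
have b's : b' < s by rewrite /s; lra.
have bs1 : 0 < 1 - b' / s by rewrite subr_gt0 ltr_pdivrMr // mul1r.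
have [u u1 fu] := dual_sphere_near1 dsf bs1.
have fsu : b < f (s *: u).
  rewrite (scalar_funZ (dual_sphere_scalar dsf)).
  have : s * (b' / s) < s * f u by rewrite ltr_pM2l //; lra.
  by rewrite mulrCA mulfV ?gt_eqF // mulr1; lra.
have su : `|s *: u| < m.
  rewrite normrZ gtr0_norm //; have : s * `|u| <= s * 1 by rewrite ler_wpM2l // ltW.
  by rewrite /s; lra.
have oO : open ([set z | `|z| < m] `&` [set z | b < f z]).
  apply: openI; first exact: open_lt_preimage norm_continuous.
  exact: open_gt_preimage (dual_sphere_continuous dsf).
by have [|z Dz []] := dense_meets_open (y := s *: u) dD oO; last exists z.
Qed.

Lemma norm_sub_rescale (x x' v : X) : `|x| = 1 ->
  `|x' - `|x'| *: v| <= `|x'| * `|x - v| + 2 * `|x - x'|.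
Proof.
move=> x1; set m := `|x'|.
have -> : x' - m *: v = (x' - m *: x) + m *: (x - v) by rewrite scalerBr addrA subrK.
have -> : x' - m *: x = (x' - x) + (1 - m) *: x by rewrite scalerBl scale1r addrA subrK.
apply: (le_trans (ler_normD _ _)); rewrite normrZ (normr_id x') addrC.
apply: lerD => //; apply: (le_trans (ler_normD _ _)).
rewrite normrZ x1 mulr1 distrC.
have : `|1 - m| <= `|x - x'| by rewrite -x1 ler_dist_dist.
lra.
Qed.

Lemma daugavet_of_closed_rat_conv (D : set X) : dense D ->
  (forall eps, 0 < eps -> forall x z, D x -> D z ->
     `|z| >= `|x| \/ closed_rat_conv (far_points D x eps) z) ->
  daugavet X.
Proof.
move=> dD DX eps e0 x x1 f dsf alpha al0.
pose d := Num.min (1 / 2) (eps / 8).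
have d0 : 0 < d by rewrite lt_min !divr_gt0.
have d1 : d <= 1 / 2 by rewrite ge_min lexx.
have de : d <= eps / 8 by rewrite ge_min lexx orbT.
have [x' Dx' xx'] := dense_near x dD d0.
have m1 : `|1 - `|x'| | <= `|x - x'| by rewrite -x1 ler_dist_dist.
have m0 : 1 / 2 < `|x'| by have := ler_norm (1 - `|x'|); lra.
have mpos : 0 < `|x'| by apply: lt_trans m0; rewrite divr_gt0.
pose a := Num.min alpha 1.
have a0 : 0 < a by rewrite lt_min al0 ltr01.
have aal : a <= alpha by rewrite ge_min lexx.
have ma : 0 < `|x'| * a / 2 by rewrite !mulr_gt0.
have bm : `|x'| * (1 - a / 2) < `|x'| by lra.
have [z' Dz' [z'm fz']] := dense_slice dD dsf mpos bm.
have e4 : 0 < eps / 4 by rewrite divr_gt0.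
have [/= zx|Az'] := DX _ e4 x' z' Dx' Dz'; first by lra.
have [y [[[v v1 <-] _] /= xv] fv] := closed_rat_conv_near_sup dsf Az' ma.
exists v; split; first by rewrite /closed_unit_ball /= ltW.
  move: fv; rewrite (scalar_funZ (dual_sphere_scalar dsf)) => fv.
  have : `|x'| * (1 - a) < `|x'| * f v by lra.
  by rewrite ltr_pM2l //; lra.
have rescale := norm_sub_rescale x x' v x1.
have eps_m : 0 <= (`|x'| - 1 / 2) * eps by rewrite mulr_ge0 // ltW // subr_gt0.
have : `|x'| * (2 - eps) < `|x'| * `|x - v| by nra.
by rewrite ltr_pM2l.
Qed.

End Daugavet.

Theorem lemma5p7 (R : realType) (X : completeNormedModType R) (D : set X) :
  dense D ->
  (daugavet X <->
   forall (eps : R), 0 < eps ->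
   forall x z : X, D x -> D z ->
     `|z| >= `|x| \/
     closed_rat_conv
       (scale_set `|x| (@open_unit_ball R X) `&` D `&` [set y | `|x - y| > 2 * `|x| - eps]) z).
Proof.
move=> dD; split => [dX eps e0 x z _ _|]; last exact: daugavet_of_closed_rat_conv.
have [xz|zx] := leP `|x| `|z|; [by left | right].
exact: daugavet_closed_rat_conv.
Qed.
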